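(* Let $C\subseteq\mathbb{F}_q^n$ be a linear code and $(A,B)$ a $2$-power $t$-error locating pair for $C$. Let $\mathbf{y}=\mathbf{c}+\mathbf{e}$ with $\mathbf{c}\in C$, $\mathrm{w}(\mathbf{e})=t$, $I_{\mathbf{e}}=\mathrm{supp}(\mathbf{e})$, and $\mathbf{e}^{(1)}=\mathbf{e}$, $\mathbf{e}^{(2)}=\mathbf{y}^2-\mathbf{c}^2$. Let $M=M_1\cap M_2$ with $M_1=\{\mathbf{a}\in A\mid \langle \mathbf{a}*\mathbf{y},\mathbf{b}\rangle=0\ \forall \mathbf{b}\in B\}$, $M_2=\{\mathbf{a}\in A\mid \langle \mathbf{a}*\mathbf{y}^2,\mathbf{v}\rangle=0\ \forall \mathbf{v}\in (B^{\perp}*C)^{\perp}\}$. Then $$M_{I_{\mathbf{e}}}=\big((\mathbf{e}^{(1)}*B)_{I_{\mathbf{e}}}\big)^{\perp}\cap \big((\mathbf{e}^{(2)}*(B^\perp*C)^\perp)_{I_{\mathbf{e}}}\big)^{\perp},$$ duals taken in $\mathbb{F}_q^{|I_{\mathbf{e}}|}$.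
   Context: All codes are $\mathbb{F}_q$-linear subspaces of $\mathbb{F}_q^n$. $\mathbf{u}*\mathbf{v}=(u_1v_1,\dots,u_nv_n)$, $\mathbf{u}^i=(u_1^i,\dots,u_n^i)$; $A*B$ is the span of all $\mathbf{a}*\mathbf{b}$; $\mathbf{u}*X=\{\mathbf{u}*\mathbf{x}:\mathbf{x}\in X\}$; $\langle\mathbf{u},\mathbf{v}\rangle=\sum_iu_iv_i$, $X^\perp$ the dual. $\mathrm{w}$ Hamming weight, $\mathrm{d}$ minimum distance, $\mathrm{supp}(\mathbf{x})=\{i:x_i\ne0\}$. For $J=\{j_1<\dots<j_s\}$, $X_J=\{(x_{j_1},\dots,x_{j_s}):\mathbf{x}\in X\}$. A pair $(A,B)$ is a $2$-power $t$-error locating pair for $C$ if: (1) $A*B\subseteq C^\perp$; (2) $\dim A>t$; (3) $\mathrm{d}(A^\perp)>t$; (4) $\mathrm{d}(A)+\mathrm{d}(C)>n$; (5) $\dim B+\dim (B^\perp*C)^\perp\ge t$. *)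

From HB Require Import structures.
From mathcomp Require Import all_boot all_order all_algebra all_field.
Set Implicit Arguments. Unset Strict Implicit. Unset Printing Implicit Defensive.
Import GRing.Theory.
Local Open Scope ring_scope.

Section Codes.
Variable F : finFieldType.

Definition sprod n (u v : 'rV[F]_n) : 'rV[F]_n := \row_i (u 0 i * v 0 i).
Definition spow n (u : 'rV[F]_n) (k : nat) : 'rV[F]_n := \row_i (u 0 i ^+ k).
Definition dotv n (u v : 'rV[F]_n) : F := \sum_i u 0 i * v 0 i.
Definition supp n (u : 'rV[F]_n) : {set 'I_n} := [set i | u 0 i != 0].
Definition wt n (u : 'rV[F]_n) : nat := #|supp u|.
(* minimum distance; the zero code gets the value n+1 (acting as +infinity) *)
Definition mindist n (X : {vspace 'rV[F]_n}) : nat :=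
  \big[minn/n.+1]_(x : 'rV[F]_n | (x \in X) && (x != 0)) wt x.

Definition span_pred m (P : pred 'rV[F]_m) : {vspace 'rV[F]_m} :=
  <<[seq x | x <- enum 'rV[F]_m & P x]>>%VS.
Definition span_img n m (f : 'rV[F]_n -> 'rV[F]_m) (X : {vspace 'rV[F]_n})
  : {vspace 'rV[F]_m} :=
  <<[seq f x | x <- enum 'rV[F]_n & x \in X]>>%VS.

Definition dual n (X : {vspace 'rV[F]_n}) : {vspace 'rV[F]_n} :=
  span_pred (fun x => [forall y : 'rV[F]_n, (y \in X) ==> (dotv x y == 0)]).
Definition star n (X Y : {vspace 'rV[F]_n}) : {vspace 'rV[F]_n} :=
  <<[seq sprod x y | x <- [seq x | x <- enum 'rV[F]_n & x \in X],
                     y <- [seq y | y <- enum 'rV[F]_n & y \in Y]]>>%VS.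
Definition smul n (u : 'rV[F]_n) (X : {vspace 'rV[F]_n}) : {vspace 'rV[F]_n} :=
  span_img (sprod u) X.

(* puncturing / restriction to J = {j_1 < ... < j_s}: (x_{j_1},...,x_{j_s}) *)
Definition restr n (J : {set 'I_n}) (x : 'rV[F]_n) : 'rV[F]_#|J| :=
  \row_(k < #|J|) x 0 (enum_val k).
Definition restrC n (J : {set 'I_n}) (X : {vspace 'rV[F]_n})
  : {vspace 'rV[F]_#|J|} := span_img (restr J) X.

Definition locating_pair2 n (t : nat) (C A B : {vspace 'rV[F]_n}) : Prop :=
  [/\ (star A B <= dual C)%VS,
      (t < \dim A)%N,
      (t < mindist (dual A))%N,
      (n < mindist A + mindist C)%N
    & (t <= \dim B + \dim (dual (star (dual B) C)))%N].

End Codes.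

From mathcomp Require Import all_boot all_order all_algebra all_field.
Set Implicit Arguments. Unset Strict Implicit. Unset Printing Implicit Defensive.
Import GRing.Theory.
Local Open Scope ring_scope.

(* For a in A the received word y = c + e may be replaced by the error in both
   conditions defining M: <a * c, b> = <a * b, c> = 0 because A * B <= C^perp,
   and a * c lies in B^perp, so a * c^2 = (a * c) * c in B^perp * C is orthogonal
   to (B^perp * C)^perp.  What remains only involves the coordinates in I_e, so
   M is the preimage in A of the right-hand side under restriction to I_e.  That
   restriction maps A onto F^I_e: otherwise a nonzero vector of F^I_e orthogonal
   to A_I_e, extended by zero, would be a word of A^perp of weight at most
   t < d(A^perp).  Only conditions (1) and (3) of a locating pair are used. *)

Lemma span_ind (K : fieldType) (vT : vectType K) (s : seq vT) (Q : vT -> Prop) :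
  Q 0 -> (forall k x y, Q x -> Q y -> Q (k *: x + y)) ->
  {in s, forall x, Q x} -> {in <<s>>%VS, forall x, Q x}.
Proof.
move=> Q0 QL; elim: s => [|v s IHs] Qs x.
  by rewrite span_nil memv0 => /eqP ->.
rewrite span_cons => /memv_addP[u /vlineP[k ->] [w sw ->]].
apply: QL; first by apply: Qs; rewrite inE eqxx.
by apply: IHs sw => z sz; apply: Qs; rewrite inE sz orbT.
Qed.

Section Codes.
Variable F : finFieldType.
Implicit Types (m n : nat).

Lemma mem_span_pred m (P : pred 'rV[F]_m) x :
  submod_closed P -> (x \in span_pred P) = P x.
Proof.
case=> P0 Plin; apply/idP/idP => [|Px]; last first.
  by apply: memv_span; rewrite map_id mem_filter Px mem_enum.
move: x; apply: span_ind => // u.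
by rewrite map_id mem_filter => /andP[].
Qed.

Lemma mem_span_img m n (f : 'rV[F]_m -> 'rV[F]_n) (X : {vspace 'rV[F]_m}) x :
  x \in X -> f x \in span_img f X.
Proof. by move=> Xx; apply/memv_span/map_f; rewrite mem_filter Xx mem_enum. Qed.

Lemma span_imgP m n (f : 'rV[F]_m -> 'rV[F]_n) (X : {vspace 'rV[F]_m}) z :
  linear f -> reflect (exists2 x, x \in X & z = f x) (z \in span_img f X).
Proof.
move=> fL; apply: (iffP idP) => [|[x Xx ->]]; last exact: mem_span_img.
move: z; apply: span_ind => [|k u v [x Xx ->] [x' Xx' ->]|u /mapP[x]].
- exists 0; rewrite ?mem0v //.
  by have := fL (-1) 0 0; rewrite scaler0 add0r scaleN1r addNr.
- by exists (k *: x + x'); rewrite ?fL // memvD ?memvZ.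
- by rewrite mem_filter => /andP[Xx _] ->; exists x.
Qed.

Lemma span_img_comp m n p (f : 'rV[F]_m -> 'rV[F]_n) (g : 'rV[F]_n -> 'rV[F]_p)
    (X : {vspace 'rV[F]_m}) :
  linear f -> linear g -> span_img g (span_img f X) = span_img (g \o f) X.
Proof.
move=> fL gL; have gfL : linear (g \o f) by move=> k x y /=; rewrite fL gL.
apply/vspaceP => z; apply/span_imgP/span_imgP => // [[_ /span_imgP[//|x Xx ->] ->]|].
  by exists x.
by case=> x Xx ->; exists (f x); rewrite ?mem_span_img.
Qed.

Lemma restr_is_linear n (J : {set 'I_n}) : linear (@restr F n J).
Proof. by move=> k x y; apply/rowP => i; rewrite !mxE. Qed.

Lemma sprod_is_linear n (u : 'rV[F]_n) : linear (sprod u).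
Proof. by move=> k x y; apply/rowP => i; rewrite !mxE mulrDr mulrCA. Qed.

Lemma sprodC n (u v : 'rV[F]_n) : sprod u v = sprod v u.
Proof. by apply/rowP => i; rewrite !mxE mulrC. Qed.

Lemma sprodA n (u v w : 'rV[F]_n) : sprod u (sprod v w) = sprod (sprod u v) w.
Proof. by apply/rowP => i; rewrite !mxE mulrA. Qed.

Lemma sprodDl n (u v w : 'rV[F]_n) : sprod (u + v) w = sprod u w + sprod v w.
Proof. by apply/rowP => i; rewrite !mxE mulrDl. Qed.

Lemma spow2 n (u : 'rV[F]_n) : spow u 2 = sprod u u.
Proof. by apply/rowP => i; rewrite !mxE expr2. Qed.

Lemma dotvC n (u v : 'rV[F]_n) : dotv u v = dotv v u.
Proof. by apply: eq_bigr => i _; rewrite mulrC. Qed.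

Lemma dotvDr n (u v w : 'rV[F]_n) : dotv u (v + w) = dotv u v + dotv u w.
Proof. by rewrite /dotv -big_split; apply: eq_bigr => i _; rewrite mxE mulrDr. Qed.

Lemma dotv_is_scalar n (v : 'rV[F]_n) : scalar (fun u : 'rV[F]_n => dotv u v).
Proof.
move=> k u w; rewrite /dotv mulr_sumr -big_split.
by apply: eq_bigr => i _; rewrite !mxE mulrDl mulrA.
Qed.

Lemma dotv_sprodA n (u v w : 'rV[F]_n) : dotv (sprod u v) w = dotv u (sprod v w).
Proof. by apply: eq_bigr => i _; rewrite !mxE mulrA. Qed.

Lemma dotv_mulmx n (u v : 'rV[F]_n) : dotv u v = (u *m v^T) 0 0.
Proof. by rewrite mxE; apply: eq_bigr => i _; rewrite mxE. Qed.

Lemma mem_star n (X Y : {vspace 'rV[F]_n}) (x y : 'rV[F]_n) :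
  x \in X -> y \in Y -> sprod x y \in star X Y.
Proof.
move=> Xx Yy; apply/memv_span/allpairsP; exists (x, y).
by rewrite !map_id !mem_filter Xx Yy /= -enumT !mem_enum.
Qed.

Lemma dualP n (X : {vspace 'rV[F]_n}) x :
  reflect (forall y, y \in X -> dotv x y = 0) (x \in dual X).
Proof.
rewrite mem_span_pred; first by apply: (iffP forall_inP) => xX y /xX => [/eqP|->].
split=> [|k u v]; rewrite -!topredE /=.
  by apply/forall_inP => y _; rewrite /dotv big1 // => i _; rewrite mxE mul0r.
move=> /forall_inP uX /forall_inP vX; apply/forall_inP => y Xy.
by rewrite dotv_is_scalar (eqP (uX y Xy)) (eqP (vX y Xy)) mulr0 addr0.
Qed.

Lemma dual_span_imgP m n (f : 'rV[F]_m -> 'rV[F]_n) (X : {vspace 'rV[F]_m}) z :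
  linear f ->
  reflect (forall x, x \in X -> dotv z (f x) = 0) (z \in dual (span_img f X)).
Proof.
move=> fL; apply: (iffP (dualP _ _)) => [zX x Xx | zX _ /span_imgP[//|x Xx ->]].
  by rewrite zX ?mem_span_img.
exact: zX.
Qed.

Lemma span_pred_cap_dual_smul n (A X : {vspace 'rV[F]_n}) (w : 'rV[F]_n) :
  span_pred (fun a => (a \in A) &&
    [forall x, (x \in X) ==> (dotv (sprod a w) x == 0)]) =
  (A :&: dual (smul w X))%VS.
Proof.
set P := fun a => _.
have PE a : P a = (a \in A :&: dual (smul w X))%VS.
  rewrite memv_cap; congr (_ && _).
  apply/forall_inP/dual_span_imgP => [|wX x /wX|wX x /wX].
  - exact: sprod_is_linear.
  - by rewrite dotv_sprodA => /eqP.
  - by rewrite dotv_sprodA => ->.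
apply/vspaceP => a; rewrite mem_span_pred ?PE //.
split=> [|k u v]; rewrite -!topredE /= !PE ?mem0v //.
by move=> Au Av; rewrite memvD ?memvZ.
Qed.

Lemma dual_neq0 m (W : {vspace 'rV[F]_m}) : (\dim W < m)%N -> dual W != 0%VS.
Proof.
move=> dimW; pose Bm : 'M[F]_(\dim W, m) := \matrix_j (vbasis W)`_j.
pose w := nz_row (kermx Bm^T).
have w0 : w != 0.
  rewrite nz_row_eq0 -mxrank_eq0 mxrank_ker mxrank_tr subn_eq0 -ltnNge.
  exact: leq_ltn_trans (rank_leq_row Bm) dimW.
have wB : w *m Bm^T = 0 by apply/sub_kermxP; exact: nz_row_sub.
apply: contraNneq w0 => W0; rewrite -memv0 -W0; apply/dualP => x Wx.
have -> : x = (\row_i coord (vbasis W) i x) *m Bm.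
  rewrite {1}(coord_vbasis Wx) mulmx_sum_row.
  by apply: eq_bigr => i _; rewrite rowK mxE.
by rewrite dotv_mulmx trmx_mul mulmxA wB mul0mx mxE.
Qed.

Lemma supp_sprodl n (w x : 'rV[F]_n) : supp (sprod w x) \subset supp w.
Proof.
by apply/subsetP => i; rewrite !inE mxE; apply: contra_neq => ->; rewrite mul0r.
Qed.

Lemma supp_spowDl n (c e : 'rV[F]_n) k :
  supp (spow (c + e) k - spow c k) \subset supp e.
Proof.
by apply/subsetP => i; rewrite !inE !mxE; apply: contra_neq => ->; rewrite addr0 subrr.
Qed.

Lemma dotv_restr n (J : {set 'I_n}) (a u : 'rV[F]_n) :
  supp u \subset J -> dotv a u = dotv (restr J a) (restr J u).
Proof.
move=> uJ; rewrite /dotv (bigID (mem J)) /= [X in _ + X]big1 ?addr0.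
  by rewrite big_enum_val; apply: eq_bigr => k _; rewrite !mxE.
move=> i iJ; have := contra (subsetP uJ i) iJ.
by rewrite inE negbK => /eqP->; rewrite mulr0.
Qed.

Definition extend n (J : {set 'I_n}) (w : 'rV[F]_#|J|) : 'rV[F]_n :=
  \row_i \sum_(k | enum_val k == i) w 0 k.
Arguments extend [n] J w.

Lemma restr_extend n (J : {set 'I_n}) (w : 'rV[F]_#|J|) : restr J (extend J w) = w.
Proof.
apply/rowP => k; rewrite !mxE (big_pred1 k) // => k'.
by apply/eqP/eqP => [/enum_val_inj|->].
Qed.

Lemma supp_extend n (J : {set 'I_n}) (w : 'rV[F]_#|J|) : supp (extend J w) \subset J.
Proof.
apply/subsetP => i; rewrite inE mxE; apply: contraR => iJ.
by rewrite big_pred0 // => k; apply: contraNF iJ => /eqP <-; exact: enum_valP.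
Qed.

Lemma mindist_le n (X : {vspace 'rV[F]_n}) x :
  x \in X -> x != 0 -> (mindist X <= wt x)%N.
Proof.
move=> Xx x0; rewrite /mindist -minEnat.
exact: (@Order.TotalTheory.bigmin_le_cond _ nat _ n.+1 x _ _ (introT andP (conj Xx x0))).
Qed.

Lemma restrC_full n (J : {set 'I_n}) (A : {vspace 'rV[F]_n}) :
  (#|J| < mindist (dual A))%N -> restrC J A = fullv.
Proof.
move=> dA; apply/eqP; rewrite eqEdim subvf dimvf /dim /= mul1n leqNgt.
apply: contraL dA => /dual_neq0; rewrite -vpick0 -leqNgt => w0.
set w := vpick _ in w0; have wA : w \in dual (restrC J A) := memv_pick _.
have xA : extend J w \in dual A.
  apply/dualP => a Aa; rewrite dotvC (dotv_restr _ (supp_extend w)) restr_extend.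
  by rewrite dotvC; apply: (dualP _ _ wA); apply: mem_span_img.
have x0 : extend J w != 0.
  apply: contraNneq w0 => x0; rewrite -(restr_extend w) x0.
  by apply/eqP/rowP => k; rewrite !mxE.
exact: leq_trans (mindist_le xA x0) (subset_leq_card (supp_extend w)).
Qed.

Lemma restrC_preimage n (J : {set 'I_n}) (A M : {vspace 'rV[F]_n})
    (D : {vspace 'rV[F]_#|J|}) :
  restrC J A = fullv -> (forall a, (a \in M) = (a \in A) && (restr J a \in D)) ->
  restrC J M = D.
Proof.
move=> Aonto ME; have restrP := span_imgP _ _ (restr_is_linear J).
apply/vspaceP => z; apply/restrP/idP => [[a]|Dz].
  by rewrite ME => /andP[_ Da] ->.
have /restrP[a Aa za] : z \in restrC J A by rewrite Aonto memvf.
by exists a; rewrite // ME Aa -za Dz.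
Qed.

Lemma mem_dual_smul_restr n (J : {set 'I_n}) (X : {vspace 'rV[F]_n})
    (a w w' : 'rV[F]_n) :
  supp w' \subset J ->
  {in X, forall x, dotv a (sprod w x) = dotv a (sprod w' x)} ->
  (a \in dual (smul w X)) = (restr J a \in dual (restrC J (smul w' X))).
Proof.
move=> w'J ww'; have w'xJ x : supp (sprod w' x) \subset J.
  exact: subset_trans (supp_sprodl w' x) w'J.
have restr_sprodL : linear (restr J \o sprod w').
  by move=> k x y /=; rewrite sprod_is_linear restr_is_linear.
rewrite /restrC /smul (span_img_comp _ (sprod_is_linear w') (restr_is_linear J)).
apply/(dual_span_imgP _ _ (sprod_is_linear w))/(dual_span_imgP _ _ restr_sprodL).
  by move=> aX x Xx; rewrite -(dotv_restr a (w'xJ x)) -ww' // aX.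
by move=> aX x Xx; rewrite ww' // (dotv_restr a (w'xJ x)) aX.
Qed.

Section ErrorLocatingPair.
Variables (n : nat) (A B C : {vspace 'rV[F]_n}).
Hypothesis AB_C : (star A B <= dual C)%VS.

Lemma dotv_sprod_star_dual (a b c : 'rV[F]_n) :
  a \in A -> b \in B -> c \in C -> dotv (sprod a b) c = 0.
Proof. by move=> Aa Bb Cc; have /dualP-> := subvP AB_C _ (mem_star Aa Bb). Qed.

Lemma dotv_sprod_received (a b c e : 'rV[F]_n) :
  a \in A -> b \in B -> c \in C -> dotv a (sprod (c + e) b) = dotv a (sprod e b).
Proof.
move=> Aa Bb Cc.
by rewrite sprodDl dotvDr [sprod c b]sprodC -dotv_sprodA dotv_sprod_star_dual ?add0r.
Qed.

Lemma dotv_sprod_received_sq (a v c e : 'rV[F]_n) :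
  a \in A -> c \in C -> v \in dual (star (dual B) C) ->
  dotv a (sprod (spow (c + e) 2) v) = dotv a (sprod (spow (c + e) 2 - spow c 2) v).
Proof.
move=> Aa Cc /dualP Vv.
have acB : sprod a c \in dual B.
  apply/dualP => b Bb.
  by rewrite dotv_sprodA sprodC -dotv_sprodA dotv_sprod_star_dual.
have c2v : dotv a (sprod (spow c 2) v) = 0.
  by rewrite spow2 -dotv_sprodA sprodA dotvC Vv ?mem_star.
by rewrite -{1}(subrK (spow c 2) (spow (c + e) 2)) [sprod (_ + spow c 2) _]sprodDl
  dotvDr c2v addr0.
Qed.

End ErrorLocatingPair.

End Codes.

Theorem mainTheorem6 (F : finFieldType) (n t : nat)
  (C A B : {vspace 'rV[F]_n}) (c e : 'rV[F]_n) :
  locating_pair2 t C A B ->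
  c \in C ->
  wt e = t ->
  let y := c + e in
  let Ie := supp e in
  let e1 := e in
  let e2 := spow y 2 - spow c 2 in
  let V := dual (star (dual B) C) in
  let M1 := span_pred (fun a => (a \in A) &&
              [forall b : 'rV[F]_n, (b \in B) ==> (dotv (sprod a y) b == 0)]) in
  let M2 := span_pred (fun a => (a \in A) &&
              [forall v : 'rV[F]_n, (v \in V) ==> (dotv (sprod a (spow y 2)) v == 0)]) in
  let M := (M1 :&: M2)%VS in
  restrC Ie M = (dual (restrC Ie (smul e1 B)) :&: dual (restrC Ie (smul e2 V)))%VS.
Proof.
move=> [AB_C _ dA _ _] Cc wte y Ie e1 e2 V M1 M2 M.
rewrite /M /M1 /M2 !span_pred_cap_dual_smul.
apply: (restrC_preimage (A := A)) => [|a].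
  by apply: restrC_full; rewrite -/(wt e) wte.
rewrite !memv_cap; case Aa: (a \in A) => //=.
have e1_received : {in B, forall b, dotv a (sprod y b) = dotv a (sprod e1 b)}.
  by move=> b Bb; apply: (dotv_sprod_received AB_C e Aa Bb Cc).
have e2_received : {in V, forall v, dotv a (sprod (spow y 2) v) = dotv a (sprod e2 v)}.
  by move=> v Vv; apply: (dotv_sprod_received_sq AB_C e Aa Cc Vv).
by rewrite (mem_dual_smul_restr (subxx Ie) e1_received)
  (mem_dual_smul_restr (supp_spowDl c e 2) e2_received).
Qed.
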